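(* Let $k>\ell\ge1$, $m\ge1$ and $w=a^kba^\ell b^m$, and let $u\in L^{\epsilon}_{\vdash_{\{w\}}}$. If $a^\alpha b$ is a prefix of $u$ then $\alpha\ge k$; if $a^\alpha b^2$ is a prefix of $u$ then $\alpha\ge 2k$.
   Context: For words $u,v$, the shuffle $u \sqcup\!\sqcup v$ is the set of all words $u_1v_1\cdots u_kv_k$ with $k\ge 1$, $u=u_1\cdots u_k$, $v=v_1\cdots v_k$ (pieces possibly empty). For a finite set $I$ of words, $v \vdash_I w$ means $w \in v \sqcup\!\sqcup u$ for some $u\in I$; $\vdash_I^*$ is its reflexive-transitive closure and $L^{\epsilon}_{\vdash_I}=\{w : \epsilon \vdash_I^* w\}$. *)

From mathcomp Require Import all_boot.
From Stdlib Require Import Relations.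
Set Implicit Arguments. Unset Strict Implicit. Unset Printing Implicit Defensive.

Section Defs.
Variable T : eqType.

(* w is in the shuffle of u and v: w = u_1 v_1 ... u_k v_k with k >= 1,
   u = u_1...u_k, v = v_1...v_k (pieces possibly empty). *)
Definition in_shuffle (u v w : seq T) : Prop :=
  exists ps : seq (seq T * seq T),
    0 < size ps /\
    u = flatten (map fst ps) /\
    v = flatten (map snd ps) /\
    w = flatten (map (fun p => p.1 ++ p.2) ps).

Definition derive_step (I : seq (seq T)) (v w : seq T) : Prop :=
  exists2 u, u \in I & in_shuffle v u w.

Definition L_eps (I : seq (seq T)) (w : seq T) : Prop :=
  clos_refl_trans (seq T) (derive_step I) [::] w.

Definition is_prefix (p u : seq T) : Prop := exists s, u = p ++ s.
End Defs.

(* Induction along a derivation from the empty word.  Write the new word as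
   a^alpha b s; in a shuffle with w = a^k b a^l b^m the block a^alpha splits as
   a^i (from the old word) and a^j (from w).  If the first b comes from w then
   j = k; otherwise it comes from the old word, which starts with a^i b, so
   i >= k by induction.  For a^alpha b b, the two b's cannot both come from w
   (w continues with a after its first b), so either both come from the old
   word (i >= 2k) or one from each (i >= k and j = k). *)
From Stdlib Require Import Relations.
From mathcomp Require Import all_boot zify.

Set Implicit Arguments.
Unset Strict Implicit.
Unset Printing Implicit Defensive.

Section Shuffle.
Variable T : eqType.

Inductive shuffle : seq T -> seq T -> seq T -> Prop :=
| shuffle_nil : shuffle [::] [::] [::]
| shuffle_consl c x y z : shuffle x y z -> shuffle (c :: x) y (c :: z)
| shuffle_consr c x y z : shuffle x y z -> shuffle x (c :: y) (c :: z).

Lemma shuffle_cat p q x y z :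
  shuffle x y z -> shuffle (p ++ x) (q ++ y) (p ++ q ++ z).
Proof.
move=> sh_xyz; elim: p => [|c p IHp] /=; last exact: shuffle_consl.
by elim: q => [|c q IHq] //=; apply: shuffle_consr.
Qed.

Lemma in_shuffleP u v w : in_shuffle u v w -> shuffle u v w.
Proof.
case=> ps [_ [-> [-> ->]]].
elim: ps => [|[p q] ps IHps] /=; first exact: shuffle_nil.
by rewrite -!catA; apply: shuffle_cat.
Qed.

Lemma shuffle_cons x y c z : shuffle x y (c :: z) ->
  (exists2 x', x = c :: x' & shuffle x' y z) \/
  (exists2 y', y = c :: y' & shuffle x y' z).
Proof. by move=> sh_xyz; inversion sh_xyz; subst; [left|right]; eauto. Qed.

Lemma shuffle_nseq_cat (a : T) n x y z : shuffle x y (nseq n a ++ z) ->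
  exists i j x' y', [/\ i + j = n, x = nseq i a ++ x', y = nseq j a ++ y'
                     & shuffle x' y' z].
Proof.
elim: n x y => [|n IHn] x y /=; first by exists 0, 0, x, y.
case/shuffle_cons => [[x1 -> /IHn]|[y1 -> /IHn]];
  move=> [i [j [x' [y' [<- -> -> sh']]]]].
- by exists i.+1, j, x', y'; rewrite addSn.
- by exists i, j.+1, x', y'; rewrite addnS.
Qed.

End Shuffle.

Section Prefix.
Variables (T : eqType) (a b : T).
Hypothesis neq_ab : a != b.

Lemma nseq_cons_inj i j x y :
  nseq i a ++ b :: x = nseq j a ++ b :: y -> i = j /\ x = y.
Proof.
elim: i j => [|i IHi] [|j] /=.
- by case.
- by case=> eq_ba; move: neq_ab; rewrite eq_ba eqxx.
- by case=> eq_ab; move: neq_ab; rewrite eq_ab eqxx.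
- by case=> /IHi [-> ->].
Qed.

Definition prefix_bounds (k : nat) (u : seq T) : Prop :=
  (forall alpha s, u = nseq alpha a ++ b :: s -> k <= alpha) /\
  (forall alpha s, u = nseq alpha a ++ [:: b, b & s] -> 2 * k <= alpha).

Variables (k : nat) (t : seq T).
Let w := nseq k a ++ [:: b, a & t].

Lemma w_prefix j y : w = nseq j a ++ b :: y -> j = k /\ y = a :: t.
Proof. by move/esym/nseq_cons_inj. Qed.

Lemma prefix_bounds_shuffle v z :
  prefix_bounds k v -> shuffle v w z -> prefix_bounds k z.
Proof.
move=> [bound1 bound2] sh_vwz; split=> alpha s eq_z; rewrite {}eq_z in sh_vwz;
  have [i [j [x [y [<- eq_v eq_w sh_xy]]]]] := shuffle_nseq_cat sh_vwz;
  move/shuffle_cons: sh_xy => sh_xy.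
- case: sh_xy => [[x' eq_x _]|[y' eq_y _]].
  + by have := bound1 i x'; rewrite eq_v eq_x => /(_ erefl); lia.
  + by have [-> _] := w_prefix (etrans eq_w (congr1 _ eq_y)); lia.
- case: sh_xy => [[x' eq_x /shuffle_cons sh']|[y' eq_y /shuffle_cons sh']].
  + case: sh' => [[x'' eq_x' _]|[y'' eq_y' _]].
    * by have := bound2 i x''; rewrite eq_v eq_x eq_x' => /(_ erefl); lia.
    * have [-> _] := w_prefix (etrans eq_w (congr1 _ eq_y')).
      by have := bound1 i x'; rewrite eq_v eq_x => /(_ erefl); lia.
  + have [-> eq_y'] := w_prefix (etrans eq_w (congr1 _ eq_y)).
    case: sh' => [[x'' eq_x' _]|[y'' eq_y'' _]].
    * by have := bound1 i x''; rewrite eq_v eq_x' => /(_ erefl); lia.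
    * by move: eq_y'; rewrite eq_y'' => -[/eqP]; rewrite eq_sym (negPf neq_ab).
Qed.

Lemma L_eps_prefix_bounds u : L_eps [:: w] u -> prefix_bounds k u.
Proof.
move=> der; elim: (clos_rt_rtn1 _ _ _ _ der) => [|v z step _ IHv].
  by split=> -[].
case: step => w'; rewrite inE => /eqP -> /in_shuffleP.
exact: prefix_bounds_shuffle.
Qed.

End Prefix.

Theorem lemma6 (T : eqType) (a b : T) (hab : a != b) (k l m : nat)
  (hkl : l < k) (hl : 1 <= l) (hm : 1 <= m) (u : seq T) :
  let w := nseq k a ++ [:: b] ++ nseq l a ++ nseq m b in
  L_eps [:: w] u ->
  (forall alpha : nat, is_prefix (nseq alpha a ++ [:: b]) u -> k <= alpha) /\
  (forall alpha : nat, is_prefix (nseq alpha a ++ [:: b; b]) u -> 2 * k <= alpha).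
Proof.
have -> : nseq k a ++ [:: b] ++ nseq l a ++ nseq m b =
          nseq k a ++ [:: b, a & nseq l.-1 a ++ nseq m b].
  by case: l hl {hkl}.
move=> /= /(L_eps_prefix_bounds hab) [bound1 bound2].
by split=> alpha [s eq_u]; [apply: (bound1 _ s) | apply: (bound2 _ s)];
  rewrite eq_u -catA.
Qed.
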